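(* Let $u,v\in U^I_{\min}$. If a monomial $\Lambda^l=\Lambda_1^{l_1}\cdots\Lambda_N^{l_N}$ ($l\in\mathbb{Z}^N$) appears with nonzero coefficient in the Laurent polynomial $D^I_{uv}(\Lambda)$, then $l\in L_u$.
   Context: $p$ prime, $n\ge1$, $d\ge2$, $I\subseteq\{0,\dots,n\}$; ${\bf a}_1,\dots,{\bf a}_N\in\mathbb{N}^{n+1}$ with coordinate sums $d$, ${\bf a}_j^+=({\bf a}_j,1)\in\mathbb{N}^{n+2}$. $\mu_I$: $\lceil|I|/d\rceil=\mu_I+1$. $U^I_{\min}$: the set of $u\in\mathbb{N}^{n+2}$ with $\sum_{i=0}^nu_i=du_{n+1}$, $u_i>0$ for $i\in I$, and $u_{n+1}=\mu_I+1$. Hypothesis: $N\ge\mu_I+|U^I_{\min}|$ and for each $u\in U^I_{\min}$ there is $k_u$, $1\le k_u\le|U^I_{\min}|$, with $u={\bf a}^+_{\mu_I+k_u}+\sum_{j=1}^{\mu_I}{\bf a}_j^+$. Define $A^I_{uv}(\Lambda)=(-1)^{\mu_I+1}\sum_{\nu\in\mathbb{N}^N,\ \sum_j\nu_j{\bf a}_j^+=pu-v}\Lambda^\nu/(\nu_1!\cdots\nu_N!)$ and $$D^I_{uv}(\Lambda)=\Big(\prod_{j=1}^{\mu_I}\Lambda_j\Big)^{-(p-1)}\Lambda_{\mu_I+k_u}^{-p}\Lambda_{\mu_I+k_v}A^I_{uv}(\Lambda).$$ $L_u$ is the set of $l\in\mathbb{Z}^N$ with $\sum_{k=1}^Nl_k{\bf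 a}_k^+={\bf 0}$, $l_j\le0$ for $j=1,\dots,\mu_I$ and $j=\mu_I+k_u$, and $l_j\ge0$ otherwise. *)

From mathcomp Require Import all_boot all_order all_algebra.
Set Implicit Arguments. Unset Strict Implicit. Unset Printing Implicit Defensive.
Import Order.TTheory GRing.Theory Num.Theory.
Local Open Scope ring_scope.

(* Conventions: coordinates 0..n+1 of N^{n+2} are 'I_n.+2 (coordinate n+1 is
   ord_max); the paper's indices j = 1..N of a_j are shifted to 0-based
   'I_N, i.e. paper index j corresponds to j-1. *)

Definition ceil_div (m d : nat) : nat := ((m + d.-1) %/ d)%N.

Definition aplus (n N : nat) (a : 'I_N -> 'I_n.+1 -> nat) (j : 'I_N)
  (i : 'I_n.+2) : nat :=
  if (i < n.+1)%N then a j (inord i) else 1%N.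

(* a_j^+ for a 0-based natural index j (0 if j >= N; never used then) *)
Definition aplus_at (n N : nat) (a : 'I_N -> 'I_n.+1 -> nat) (j : nat)
  (i : 'I_n.+2) : nat :=
  match @insub _ (fun x : nat => (x < N)%N) 'I_N j with
  | Some j' => aplus a j' i
  | None => 0%N
  end.

(* Exponent vectors u in N^{n+2}; for u in U^I_min every coordinate is
   bounded by d*(mu+1) (they sum, on 0..n, to d*u_{n+1} = d*(mu+1)), so this
   finite type contains all of U^I_min. *)
Definition expvec (n d mu : nat) := {ffun 'I_n.+2 -> 'I_(d * mu.+1).+1}.

Definition Umin (n d mu : nat) (I : {set 'I_n.+1}) : {set expvec n d mu} :=
  [set u : expvec n d mu |
    [&& (\sum_(i < n.+2 | (i < n.+1)%N) (u i : nat) == d * u ord_max)%N,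
        [forall i : 'I_n.+1, (i \in I) ==> (0 < u (widen_ord (leqnSn _) i))%N]
      & ((u ord_max : nat) == mu.+1)]].

(* Laurent polynomials in Lambda_1..Lambda_N over Q, as coefficient functions
   on exponent vectors l in Z^N (l : 'I_N -> int). *)
Definition laurent (N : nat) := ('I_N -> int) -> rat.

Definition lmulmon (N : nat) (m : 'I_N -> int) (f : laurent N) : laurent N :=
  fun l => f (fun j => l j - m j).

Definition unitexp (N : nat) (k : nat) (c : int) : 'I_N -> int :=
  fun j => if (j : nat) == k :> nat then c else 0.

(* A^I_{uv}(Lambda) = (-1)^{mu+1} sum_{nu in N^N, sum_j nu_j a_j^+ = p u - v}
   Lambda^nu / (nu_1! ... nu_N!).  Distinct nu give distinct monomials, so the
   coefficient of Lambda^l is the term with nu = l, if l is such a nu. *)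
Definition Acoef (n N p mu : nat) (a : 'I_N -> 'I_n.+1 -> nat)
  (u v : 'I_n.+2 -> nat) : laurent N :=
  fun l =>
    if [forall j, (0 <= l j)%R] &&
       [forall i : 'I_n.+2,
          ((\sum_j `|l j| * aplus a j i)%N%:Z == (p * u i)%N%:Z - (v i)%:Z)%R]
    then ((-1) ^+ mu.+1 / ((\prod_j (`|l j|)`!)%N)%:R)%R
    else 0%R.

(* D^I_{uv} = (prod_{j=1}^{mu} Lambda_j)^{-(p-1)} Lambda_{mu+k_u}^{-p}
              Lambda_{mu+k_v} A^I_{uv}   (paper indices, 1-based) *)
Definition Dcoef (n N p mu : nat) (a : 'I_N -> 'I_n.+1 -> nat)
  (u v : 'I_n.+2 -> nat) (ku kv : nat) : laurent N :=
  lmulmon (fun j : 'I_N => if (j < mu)%N then (- (p%:Z - 1))%R else 0%R)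
   (lmulmon (@unitexp N (mu + ku).-1 (- p%:Z)%R)
    (lmulmon (@unitexp N (mu + kv).-1 1%R)
     (Acoef p mu a u v))).

Definition inL (n N mu : nat) (a : 'I_N -> 'I_n.+1 -> nat) (ku : nat)
  (l : 'I_N -> int) : Prop :=
  (forall i : 'I_n.+2, (\sum_k l k * (aplus a k i)%:Z = 0)%R) /\
  (forall j : 'I_N, ((j < mu)%N \/ (j : nat) = (mu + ku).-1) -> (l j <= 0)%R) /\
  (forall j : 'I_N, ~ ((j < mu)%N \/ (j : nat) = (mu + ku).-1) -> (0 <= l j)%R).

(* A monomial Lambda^l of D^I_{uv} is Lambda^(nu + e), where Lambda^nu occurs in
   A^I_{uv} (so nu >= 0 and sum_j nu_j a_j^+ = p u - v) and Lambda^e is the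
   monomial prefactor.  Writing u = a^+_{mu+k_u} + s and v = a^+_{mu+k_v} + s with
   s = sum_{j <= mu} a_j^+, the relation sum_j l_j a_j^+ = 0 is immediate, and the
   sign conditions reduce to nu_j < p for j <= mu and for j = mu + k_u.
   For j <= mu, a_j is a 0/1 vector, because U^I_min has elements with any
   prescribed coordinate <= 1 and they all dominate a_j; if nu_j >= p, then
   p u_i >= p + v_i forces u_i >= 2 wherever a_ji = 1, so u >= 1_I + a_j and
   d (mu + 1) >= #|I| + d, contradicting ceil(#|I| / d) = mu + 1.
   For j = mu + k_u, the coordinates of s add up to d mu < #|I|, so s vanishes at
   some i in I; there u_i = a_ji > 0 and v_i > 0, hence nu_j u_i < p u_i. *)

From mathcomp Require Import all_boot all_order all_algebra zify.
Import GRing.Theory.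
Set Implicit Arguments. Unset Strict Implicit.

Local Notation widen i := (widen_ord (leqnSn _) i).

Lemma sum_drop_ord_max n (F : 'I_n.+2 -> nat) :
  \sum_(i < n.+2 | i < n.+1) F i = \sum_(i < n.+1) F (widen i).
Proof.
rewrite big_mkcond big_ord_recr /= ltnn addn0.
by apply: eq_bigr => i _; rewrite ltn_ord.
Qed.

Lemma sum_mem_card n (I : {set 'I_n}) : \sum_(i < n) (i \in I : nat) = #|I|.
Proof. by rewrite -sum1_card [RHS]big_mkcond; apply: eq_bigr => i _; case: (i \in I). Qed.

Lemma ceil_div_bounds m d q : 0 < d -> ceil_div m d = q.+1 -> d * q < m <= d * q.+1.
Proof.
rewrite /ceil_div => d_gt0 ceil_eq.
have := leq_divM (m + d.-1) d; have := ltn_ceil (m + d.-1) d_gt0.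
rewrite ceil_eq; lia.
Qed.

Lemma exists_zero_of_sum_lt_card n (I : {set 'I_n}) (f : 'I_n -> nat) :
  \sum_i f i < #|I| -> exists2 i, i \in I & f i = 0.
Proof.
move=> sum_lt.
case: (boolP [exists i in I, f i == 0]) => [/exists_inP [i iI /eqP] | /exists_inPn f_pos].
  by exists i.
suff: #|I| <= \sum_i f i by lia.
rewrite -sum_mem_card; apply: leq_sum => i _.
by have := f_pos i; case: (i \in I) => //= /(_ isT); lia.
Qed.

Lemma exponent_lt_of_01_row n (I : {set 'I_n}) (c u v : 'I_n -> nat) e p :
  (forall i, c i <= 1) -> (forall i, c i <= v i) ->
  (forall i, i \in I -> 0 < u i) -> (forall i, e * c i + v i <= p * u i) ->
  \sum_i u i < #|I| + \sum_i c i -> e < p.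
Proof.
move=> c_le1 c_le_v u_pos bal sum_lt; rewrite ltnNge; apply: contraTN sum_lt => p_le_e.
rewrite -leqNgt -sum_mem_card -big_split /=; apply: leq_sum => i _.
have := u_pos i; have := bal i; have := c_le_v i; have := c_le1 i.
case: (i \in I) => /=; nia.
Qed.

Lemma Acoef_neq0 n N p mu (a : 'I_N -> 'I_n.+1 -> nat) (u v : 'I_n.+2 -> nat)
    (l : 'I_N -> int) :
  Acoef p mu a u v l != 0%R ->
  (forall j, 0 <= l j)%R /\ forall i, \sum_j `|l j|%N * aplus a j i + v i = p * u i.
Proof.
rewrite /Acoef; case: ifP => [/andP[/forallP l_ge0 /forallP bal] _ | _]; last by rewrite eqxx.
by split=> // i; have /eqP := bal i; lia.
Qed.

Definition aplus_prefix n N (a : 'I_N -> 'I_n.+1 -> nat) mu (i : 'I_n.+2) : nat :=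
  \sum_(j < N | j < mu) aplus a j i.

(* D^I_{uv} = Lambda^(Dexp p mu k_u k_v) A^I_{uv}. *)
Definition Dexp N p mu ku kv (j : 'I_N) : int :=
  ((if (j < mu)%N then - (p%:Z - 1) else 0) + unitexp (mu + ku).-1 (- p%:Z) j
   + unitexp (mu + kv).-1 1 j)%R.

Lemma Dcoef_neq0 n N p mu (a : 'I_N -> 'I_n.+1 -> nat) (u v : 'I_n.+2 -> nat)
    ku kv (l : 'I_N -> int) :
  Dcoef p mu a u v ku kv l != 0%R ->
  exists nu : 'I_N -> nat, (forall j, l j = (nu j)%:Z + Dexp p mu ku kv j)%R /\
    forall i, \sum_j nu j * aplus a j i + v i = p * u i.
Proof.
move/Acoef_neq0 => [nu_ge0 bal]; eexists; split; last exact: bal.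
by move=> j; have := nu_ge0 j; rewrite /Dexp; lia.
Qed.

Lemma sum_unitexp N k (K : 'I_N) c (F : 'I_N -> int) :
  (K : nat) = k -> (\sum_j unitexp k c j * F j = c * F K)%R.
Proof.
move=> <-; rewrite (bigD1 K) //= /unitexp eqxx big1 ?addr0 // => j /negbTE.
by rewrite -(inj_eq val_inj) => ->; rewrite mul0r.
Qed.

Lemma sum_Dexp_aplus n N (a : 'I_N -> 'I_n.+1 -> nat) p mu ku kv (Ku Kv : 'I_N) i :
  (Ku : nat) = (mu + ku).-1 -> (Kv : nat) = (mu + kv).-1 ->
  (\sum_j Dexp p mu ku kv j * (aplus a j i)%:Z
   = (aplus a Kv i)%:Z - p%:Z * (aplus a Ku i)%:Z
     - (p%:Z - 1) * (aplus_prefix a mu i)%:Z)%R.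
Proof.
move=> Ku_eq Kv_eq; rewrite /Dexp.
under eq_bigr do rewrite !mulrDl.
rewrite !big_split /= (sum_unitexp _ _ Ku_eq) (sum_unitexp _ _ Kv_eq) mul1r.
suff -> : (\sum_(j : 'I_N) (if (j < mu)%N then - (p%:Z - 1) else 0) * (aplus a j i)%:Z
           = - (p%:Z - 1) * (aplus_prefix a mu i)%:Z)%R by lia.
rewrite /aplus_prefix (big_morph Posz PoszD (erefl (Posz 0))) big_distrr [RHS]big_mkcond /=.
by apply: eq_bigr => j _; case: ifP; rewrite ?mul0r.
Qed.

Lemma inL_of_exponent_bounds n N (a : 'I_N -> 'I_n.+1 -> nat) p mu ku kv
    (Ku Kv : 'I_N) (u v : 'I_n.+2 -> nat) (nu : 'I_N -> nat) :
  (Ku : nat) = (mu + ku).-1 -> (Kv : nat) = (mu + kv).-1 -> mu <= Ku -> mu <= Kv ->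
  (forall i, u i = aplus a Ku i + aplus_prefix a mu i) ->
  (forall i, v i = aplus a Kv i + aplus_prefix a mu i) ->
  (forall i, \sum_j nu j * aplus a j i + v i = p * u i) ->
  (forall j : 'I_N, j < mu -> nu j < p) -> nu Ku < p ->
  forall l : 'I_N -> int, (forall j, l j = (nu j)%:Z + Dexp p mu ku kv j)%R ->
  inL mu a ku l.
Proof.
move=> Ku_eq Kv_eq mu_le_Ku mu_le_Kv u_eq v_eq bal nu_lt nuKu_lt l l_eq.
split; [|split] => [i | j | j].
- have sum_nu : (\sum_j (nu j)%:Z * (aplus a j i)%:Z = (p * u i)%:Z - (v i)%:Z)%R.
    rewrite -bal PoszD addrK (big_morph Posz PoszD (erefl (Posz 0))).
    by apply: eq_bigr => j _; rewrite PoszM.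
  under eq_bigr do rewrite l_eq mulrDl.
  by rewrite big_split /= sum_nu (sum_Dexp_aplus _ _ _ Ku_eq Kv_eq) u_eq v_eq; lia.
- rewrite l_eq /Dexp /unitexp => -[j_lt | j_eq].
  + have := nu_lt j j_lt; rewrite j_lt; case: eqP; case: eqP; lia.
  + have -> : j = Ku by apply: val_inj; rewrite /= j_eq.
    rewrite -Ku_eq eqxx ltnNge mu_le_Ku /=.
    by have := nuKu_lt; case: eqP; lia.
- rewrite l_eq /Dexp /unitexp => j_other.
  case: ifP => [j_lt|_]; first by case: j_other; left.
  case: eqP => [j_eq|_]; first by case: j_other; right.
  case: eqP; lia.
Qed.

Lemma aplus_widen n N (a : 'I_N -> 'I_n.+1 -> nat) j (i : 'I_n.+1) :
  aplus a j (widen i) = a j i.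
Proof. by rewrite /aplus /= ltn_ord inord_val. Qed.

Lemma aplus_le_prefix n N (a : 'I_N -> 'I_n.+1 -> nat) mu (j : 'I_N) i :
  j < mu -> aplus a j i <= aplus_prefix a mu i.
Proof. by move=> j_lt; rewrite /aplus_prefix (bigD1 j) //= leq_addr. Qed.

Section Umin.

Variables (n d mu : nat) (I : {set 'I_n.+1}).
Local Notation Umin := (@Umin n d mu I).

Lemma Umin_sum w : w \in Umin -> \sum_(i < n.+1) w (widen i) = d * mu.+1.
Proof. by rewrite inE sum_drop_ord_max => /and3P[/eqP -> _ /eqP ->]. Qed.

Lemma Umin_pos w i : w \in Umin -> i \in I -> 0 < w (widen i).
Proof. by rewrite inE => /and3P[_ /forallP/(_ i)/implyP w_pos _]. Qed.

(* The witness is the indicator of I, topped up to total d (mu + 1) at a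
   coordinate other than i0. *)
Lemma Umin_small_coord (i0 : 'I_n.+1) :
  0 < n -> 0 < d -> #|I| <= d * mu.+1 -> exists2 w, w \in Umin & w (widen i0) <= 1.
Proof.
move=> n_gt0 d_gt0 card_le; pose M := d * mu.+1.
have [i1 i1_neq_i0] : exists i1 : 'I_n.+1, i1 != i0.
  exists (inord (i0 == 0 :> nat)); rewrite -(inj_eq val_inj) /= inordK; case: eqP; lia.
pose g i := (i \in I) + (i == i1) * (M - #|I|).
have g_le i : g i <= M.
  rewrite /g; case: eqP => [->|_]; last by case: (i \in I); rewrite /M; nia.
  have : (i1 \in I) <= #|I| by rewrite (cardD1 i1 I) leq_addr.
  by rewrite mul1n; lia.
pose w : expvec n d mu := [ffun i : 'I_n.+2 => inord (if i < n.+1 then g (inord i) else mu.+1)].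
have w_widen i : w (widen i) = g i :> nat.
  by rewrite ffunE /= ltn_ord inord_val inordK // ltnS g_le.
have w_max : w ord_max = mu.+1 :> nat by rewrite ffunE ltnn inordK // ltnS /M; nia.
exists w.
- rewrite inE sum_drop_ord_max w_max; apply/and3P; split => //.
  + under eq_bigr do rewrite w_widen.
    rewrite big_split /= sum_mem_card (bigD1 i1) //= eqxx big1 => [|j /negbTE -> //].
    by rewrite mul1n addn0 subnKC.
  + by apply/forallP => i; apply/implyP => iI; rewrite w_widen /g iI.
- by rewrite w_widen /g eq_sym (negbTE i1_neq_i0) addn0; case: (i0 \in I).
Qed.

Section Decomposition.

Variables (N : nat) (a : 'I_N -> 'I_n.+1 -> nat) (k : expvec n d mu -> nat).
Hypothesis N_ge : mu + #|Umin| <= N.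
Hypothesis k_spec : forall w, w \in Umin ->
  (1 <= k w <= #|Umin|) /\
  forall i, (w i : nat) = aplus_at a (mu + k w).-1 i + \sum_(j < N | j < mu) aplus a j i.

Lemma Umin_decomp w : w \in Umin -> exists K : 'I_N,
  [/\ (K : nat) = (mu + k w).-1, mu <= K & forall i, (w i : nat) = aplus a K i + aplus_prefix a mu i].
Proof.
move=> /k_spec[/andP[kw_ge1 kw_le] w_eq].
have K_lt : (mu + k w).-1 < N by lia.
exists (Ordinal K_lt); split=> //=; first by lia.
by move=> i; rewrite w_eq /aplus_at insubT.
Qed.

Lemma prefix_row_le1 (j : 'I_N) (i : 'I_n.+1) :
  0 < n -> 0 < d -> #|I| <= d * mu.+1 -> j < mu -> a j i <= 1.
Proof.
move=> n_gt0 d_gt0 card_le j_lt.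
have [w w_in w_le1] := Umin_small_coord i n_gt0 d_gt0 card_le.
have [K [_ _ w_eq]] := Umin_decomp w_in.
by move: w_le1; rewrite w_eq -(aplus_widen a j); have := aplus_le_prefix a (widen i) j_lt; lia.
Qed.

Variables (p : nat) (u v : expvec n d mu) (nu : 'I_N -> nat).
Hypotheses (u_in : u \in Umin) (v_in : v \in Umin).
Hypotheses (card_gt : d * mu < #|I|) (row_sum : forall j, \sum_i a j i = d).
Hypothesis bal : forall i, \sum_j nu j * aplus a j i + v i = p * u i.

Lemma prefix_exponent_lt (j : 'I_N) :
  0 < n -> 0 < d -> #|I| <= d * mu.+1 -> j < mu -> nu j < p.
Proof.
move=> n_gt0 d_gt0 card_le j_lt; have [Kv [_ _ v_eq]] := Umin_decomp v_in.
apply: (@exponent_lt_of_01_row _ I (a j) (fun i => u (widen i)) (fun i => v (widen i))).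
- by move=> i; apply: prefix_row_le1.
- move=> i; rewrite v_eq -(aplus_widen a j).
  by have := aplus_le_prefix a (widen i) j_lt; lia.
- by move=> i; apply: Umin_pos.
- move=> i; rewrite -bal -(aplus_widen a j) leq_add2r.
  by rewrite (bigD1 j) //= leq_addr.
- by rewrite Umin_sum // row_sum; lia.
Qed.

Lemma last_exponent_lt (K : 'I_N) : (K : nat) = (mu + k u).-1 -> nu K < p.
Proof.
move=> K_eq; have [K' [K'_eq _ u_eq]] := Umin_decomp u_in.
have <- : K' = K by apply: val_inj; rewrite /= K_eq K'_eq.
have prefix_sum_lt : \sum_(i < n.+1) aplus_prefix a mu (widen i) < #|I|.
  have := Umin_sum u_in; under eq_bigr do rewrite u_eq aplus_widen.
  by rewrite big_split /= row_sum mulnS => /addnI ->.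
have [i0 i0_in prefix0] := exists_zero_of_sum_lt_card prefix_sum_lt.
have := Umin_pos u_in i0_in; have := Umin_pos v_in i0_in; have := bal (widen i0).
by rewrite u_eq prefix0 addn0 (bigD1 K') //=; nia.
Qed.

End Decomposition.

End Umin.

Theorem lemma7p5 (p n d N : nat) (I : {set 'I_n.+1})
  (a : 'I_N -> 'I_n.+1 -> nat) (mu : nat) (k : expvec n d mu -> nat)
  (u v : expvec n d mu) :
  prime p -> (1 <= n)%N -> (2 <= d)%N ->
  (forall j : 'I_N, (\sum_(i < n.+1) a j i)%N = d) ->
  ceil_div #|I| d = mu.+1 ->
  (mu + #|@Umin n d mu I| <= N)%N ->
  (forall w, w \in @Umin n d mu I ->
     (1 <= k w <= #|@Umin n d mu I|)%N /\
     forall i : 'I_n.+2,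
       (w i : nat) = (aplus_at a (mu + k w).-1 i
                      + \sum_(j < N | (j < mu)%N) aplus a j i)%N) ->
  u \in @Umin n d mu I -> v \in @Umin n d mu I ->
  forall l : 'I_N -> int,
    Dcoef p mu a (fun i => u i : nat) (fun i => v i : nat) (k u) (k v) l != 0%R ->
    inL mu a (k u) l.
Proof.
move=> _ n_gt0 /ltnW d_gt0 row_sum ceil_eq N_ge k_spec u_in v_in l D_neq0.
have /andP[card_gt card_le] := ceil_div_bounds d_gt0 ceil_eq.
have [nu [l_eq bal]] := Dcoef_neq0 D_neq0.
have [Ku [Ku_eq mu_le_Ku u_eq]] := Umin_decomp N_ge k_spec u_in.
have [Kv [Kv_eq mu_le_Kv v_eq]] := Umin_decomp N_ge k_spec v_in.
apply: (inL_of_exponent_bounds Ku_eq Kv_eq mu_le_Ku mu_le_Kv u_eq v_eq bal _ _ l_eq).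
- move=> j; apply: (prefix_exponent_lt (p := p) N_ge k_spec u_in v_in card_gt row_sum bal)
    n_gt0 d_gt0 card_le.
- exact: (last_exponent_lt (p := p) N_ge k_spec u_in v_in card_gt row_sum bal Ku_eq).
Qed.
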